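(* Let $\{a_n\}_{n=1}^\infty$ be a sequence of real numbers with $\limsup_{n\to\infty} a_n = \infty$. Then for infinitely many $k \in \mathbb{N}$, $$a_{k+1} > \left(1 + \frac{1}{k^2}\right)\max_{1 \le n \le k} a_n.$$ *)

From Stdlib Require Import Reals.
Open Scope R_scope.

(* Sequences a_1, a_2, ... are modelled as a : nat -> R; the value a 0 is
   never used.  prefix_max a k = max_{1 <= n <= k} a n  (for k >= 1). *)
Fixpoint prefix_max (a : nat -> R) (k : nat) : R :=
  match k with
  | O => a 1%nat            (* junk value, never used for k = 0 *)
  | S O => a 1%nat
  | S k' => Rmax (prefix_max a k') (a k)
  end.

Definition limsup_infty (a : nat -> R) : Prop :=
  forall (M : R) (N : nat), exists n : nat, (N <= n)%nat /\ M < a n.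

(* If no k >= m has a jump, the running maximum M_k stays below C (1 - 1/k):
   the factor (1 + 1/k^2) is absorbed because
   (1 + 1/k^2) (1 - 1/k) <= 1 - 1/(k+1), i.e. k^4 - 1 <= k^4.
   So the sequence would be bounded from m on, contradicting limsup a_n = oo. *)
From Stdlib Require Import Reals Lra Lia Psatz Classical.
Open Scope R_scope.

Lemma prefix_max_S (a : nat -> R) (k : nat) : (1 <= k)%nat ->
  prefix_max a (S k) = Rmax (prefix_max a k) (a (S k)).
Proof. intros Hk; destruct k as [|k]; [lia | reflexivity]. Qed.

Lemma le_prefix_max (a : nat -> R) (n : nat) : (1 <= n)%nat ->
  a n <= prefix_max a n.
Proof.
  intros Hn; destruct n as [|[|n]]; [lia | simpl; lra | apply Rmax_r].
Qed.

Lemma Rmax_le_damped_bound (x C M b : R) : 0 < x -> 0 <= C ->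
  M <= C * (1 - 1 / x) -> b <= (1 + 1 / x ^ 2) * M ->
  Rmax M b <= C * (1 - 1 / (x + 1)).
Proof.
  intros Hx HC HM Hb.
  assert (Hdamp : (1 + 1 / x ^ 2) * (1 - 1 / x) <= 1 - 1 / (x + 1)).
  { assert (E : 1 - 1 / (x + 1) - (1 + 1 / x ^ 2) * (1 - 1 / x)
                = 1 / (x ^ 3 * (x + 1))) by (field; lra).
    assert (0 < x ^ 3) by (apply pow_lt; lra).
    assert (0 < 1 / (x ^ 3 * (x + 1))) by (apply Rdiv_lt_0_compat; nra).
    lra. }
  assert (Hmono : C * (1 - 1 / x) <= C * (1 - 1 / (x + 1))).
  { apply Rmult_le_compat_l; [lra|].
    assert (1 / (x + 1) <= 1 / x)
      by (unfold Rdiv; rewrite !Rmult_1_l; apply Rinv_le_contravar; lra).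
    lra. }
  assert (Hfac : 0 < 1 + 1 / x ^ 2)
    by (assert (0 < 1 / x ^ 2) by (apply Rdiv_lt_0_compat, pow_lt; lra); lra).
  apply Rmax_lub; [lra|].
  destruct (Rle_lt_dec M 0) as [HM0 | HM0].
  - assert (1 / (x + 1) <= 1) by (apply Rmult_le_reg_r with (x + 1);
      [lra | field_simplify; lra]).
    nra.
  - apply Rle_trans with ((1 + 1 / x ^ 2) * (C * (1 - 1 / x))).
    + apply Rle_trans with (1 := Hb), Rmult_le_compat_l; lra.
    + rewrite (Rmult_comm C), <- Rmult_assoc, (Rmult_comm _ C).
      apply Rmult_le_compat_l; lra.
Qed.

Lemma prefix_max_damped_bound (a : nat -> R) (m : nat) (C : R) :
  (1 <= m)%nat -> 0 <= C ->
  (forall k, (m <= k)%nat -> a (S k) <= (1 + 1 / INR k ^ 2) * prefix_max a k) ->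
  prefix_max a m <= C * (1 - 1 / INR m) ->
  forall k, (m <= k)%nat -> prefix_max a k <= C * (1 - 1 / INR k).
Proof.
  intros Hm HC Hjump Hbase k Hk.
  induction Hk as [|k Hk IH]; [exact Hbase|].
  rewrite prefix_max_S, S_INR by lia.
  apply Rmax_le_damped_bound; auto.
  apply lt_0_INR; lia.
Qed.

Lemma bounded_of_no_jumps (a : nat -> R) (m : nat) : (2 <= m)%nat ->
  (forall k, (m <= k)%nat -> a (S k) <= (1 + 1 / INR k ^ 2) * prefix_max a k) ->
  exists C, forall n, (m <= n)%nat -> a n <= C.
Proof.
  intros Hm Hjump.
  set (C := 2 * Rmax (prefix_max a m) 0).
  assert (HC : 0 <= C) by (unfold C; generalize (Rmax_r (prefix_max a m) 0); lra).
  assert (Hhalf : 1 / 2 <= 1 - 1 / INR m).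
  { assert (2 <= INR m) by (replace 2 with (INR 2) by (simpl; lra); apply le_INR; lia).
    assert (1 / INR m <= 1 / 2)
      by (unfold Rdiv; rewrite !Rmult_1_l; apply Rinv_le_contravar; lra).
    lra. }
  exists C; intros n Hn.
  assert (Hbase : prefix_max a m <= C * (1 - 1 / INR m)).
  { assert (C * (1 / 2) <= C * (1 - 1 / INR m)) by (apply Rmult_le_compat_l; lra).
    generalize (Rmax_l (prefix_max a m) 0); unfold C in *; lra. }
  assert (Hbound := prefix_max_damped_bound a m C ltac:(lia) HC Hjump Hbase n Hn).
  assert (0 < 1 / INR n) by (apply Rdiv_lt_0_compat; [lra | apply lt_0_INR; lia]).
  assert (a n <= prefix_max a n) by (apply le_prefix_max; lia).
  nra.
Qed.

Theorem lemma2p7 (a : nat -> R) (H : limsup_infty a) :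
  forall N : nat, exists k : nat, (N <= k)%nat /\ (1 <= k)%nat /\
    a (S k) > (1 + 1 / (INR k ^ 2)) * prefix_max a k.
Proof.
  intros N; apply NNPP; intros Hno.
  set (m := Nat.max N 2).
  assert (Hjump : forall k, (m <= k)%nat ->
            a (S k) <= (1 + 1 / INR k ^ 2) * prefix_max a k).
  { intros k Hk; apply Rnot_gt_le; intros Hgt.
    apply Hno; exists k; unfold m in Hk; repeat split; [lia | lia | exact Hgt]. }
  destruct (bounded_of_no_jumps a m ltac:(unfold m; lia) Hjump) as [C HC].
  destruct (H C m) as [n [Hn Hbig]].
  specialize (HC n Hn); lra.
Qed.
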